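(* Let $K$ be a field and let $A$ be a finitely generated $K$-algebra of finite GK dimension, and let $V$ be a finite-dimensional $K$-subspace of $A$ that contains $1$ and generates $A$ as a $K$-algebra. Then there is a constant $C>0$ such that $$\dim_K(V^n)\;>\;C\,n\,\dim_K(V^{n+1}/V^n)$$ for infinitely many positive integers $n$.
   Context: $V^n$ denotes the $K$-linear span of all products of $n$ elements of $V$; since $1\in V$, $V^n\subseteq V^{n+1}$. $\mathrm{GKdim}(A)=\limsup_{n\to\infty}\log\dim_K(V^n)/\log n$. *)

From HB Require Import structures.
From Stdlib Require Import ClassicalEpsilon.
From mathcomp Require Import all_boot all_order all_algebra.
From mathcomp Require Import all_classical all_reals all_analysis.
Set Implicit Arguments. Unset Strict Implicit. Unset Printing Implicit Defensive.
Import Order.TTheory GRing.Theory Num.Theory.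
Local Open Scope ring_scope.

Section GK.
Variables (K : fieldType) (A : algType K).

Definition lincomb (s : seq A) (c : 'I_(size s) -> K) : A :=
  \sum_(i < size s) c i *: s`_i.

Definition kspan (S : A -> Prop) : A -> Prop :=
  fun x => exists (s : seq A) (c : 'I_(size s) -> K),
    (forall y, y \in s -> S y) /\ x = lincomb c.

Definition kfree (s : seq A) : Prop :=
  forall c : 'I_(size s) -> K, lincomb c = 0 -> forall i, c i = 0.

Definition has_dim (S : A -> Prop) (d : nat) : Prop :=
  exists s : seq A, [/\ size s = d, kfree s, (forall y, y \in s -> S y)
    & forall x, S x -> kspan (fun y => y \in s) x].

(* dim_K S (meaningful when S is a finite-dimensional subspace; 0 otherwise) *)
Definition kdim (S : A -> Prop) : nat :=
  ClassicalEpsilon.epsilon (inhabits 0%N) (has_dim S).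

Fixpoint prods (V : A -> Prop) (n : nat) : A -> Prop :=
  match n with
  | 0 => fun x => x = 1
  | n.+1 => fun x => exists v w, [/\ V v, prods V n w & x = v * w]
  end.

Definition Vpow (V : A -> Prop) (n : nat) : A -> Prop := kspan (prods V n).

Definition ksubspace (V : A -> Prop) : Prop :=
  [/\ V 0, forall x y, V x -> V y -> V (x + y) & forall (a : K) x, V x -> V (a *: x)].

Definition kfindim_subspace (V : A -> Prop) : Prop :=
  ksubspace V /\ exists d, has_dim V d.

Definition ksubalg (B : A -> Prop) : Prop :=
  [/\ ksubspace B, B 1 & forall x y, B x -> B y -> B (x * y)].

Definition kgenerates (V : A -> Prop) : Prop :=
  forall B, ksubalg B -> (forall v, V v -> B v) -> forall x, B x.

Definition GKdim_wrt (R : realType) (V : A -> Prop) : \bar R :=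
  limn_esup (fun n : nat =>
    ((ln (kdim (Vpow V n))%:R / ln n%:R : R)%:E)).
End GK.

(** The dimensions d(n) = dim V^n are positive, since 1 lies in every V^n, and
    finiteness of the GK dimension bounds them by a polynomial n^M.  If, for
    C = 1/(M+1), the inequality d(n) > C n (d(n+1) - d(n)) failed for all large
    n, then d(n+1)/d(n) >= (n+M+1)/n, so d(n)/(n(n+1)...(n+M)) would be
    eventually nondecreasing and d would grow at least like n^(M+1),
    contradicting the bound. *)

From HB Require Import structures.
From Stdlib Require Import ClassicalEpsilon.
From mathcomp Require Import all_boot all_order all_algebra.
From mathcomp Require Import all_classical all_reals all_analysis.
From mathcomp Require Import lra zify.
Import Order.TTheory GRing.Theory Num.Theory.
Local Open Scope ring_scope.
Set Implicit Arguments. Unset Strict Implicit. Unset Printing Implicit Defensive.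

Section FiniteSpans.
Variables (K : fieldType) (A : algType K).
Implicit Types (l s : seq A) (S W : A -> Prop).

Definition lspan l (x : A) : Prop := exists c : 'I_(size l) -> K, x = lincomb c.

Lemma ksubspace_lincomb W s (c : 'I_(size s) -> K) :
  ksubspace W -> (forall y, y \in s -> W y) -> W (lincomb c).
Proof.
case=> W0 WD WZ Ws; apply: (big_ind W) => // i _.
by apply/WZ/Ws/mem_nth.
Qed.

Lemma ksubspace_lspan l : ksubspace (lspan l).
Proof.
split.
- by exists (fun _ => 0); rewrite /lincomb big1 // => i _; rewrite scale0r.
- move=> _ _ [c1 ->] [c2 ->]; exists (fun i => c1 i + c2 i).
  by rewrite /lincomb -big_split; apply: eq_bigr => i _; rewrite scalerDl.
- move=> a _ [c ->]; exists (fun i => a * c i).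
  by rewrite /lincomb scaler_sumr; apply: eq_bigr => i _; rewrite scalerA.
Qed.

Lemma lspan_mem l y : y \in l -> lspan l y.
Proof.
move=> yl; have il : (index y l < size l)%N by rewrite index_mem.
exists (fun i => if val i == index y l then 1 else 0).
rewrite /lincomb (bigD1 (Ordinal il)) //= eqxx scale1r nth_index // big1 ?addr0 //.
by move=> i /negbTE; rewrite -val_eqE /= => ->; rewrite scale0r.
Qed.

Lemma lspan_trans l l' x :
  (forall y, y \in l -> lspan l' y) -> lspan l x -> lspan l' x.
Proof. by move=> ll' [c ->]; apply: ksubspace_lincomb (ksubspace_lspan l') ll'. Qed.

Lemma kspan_mem_lspan l x : kspan (fun y => y \in l) x -> lspan l x.
Proof.
case=> s [c [sl ->]]; apply: ksubspace_lincomb (ksubspace_lspan l) _ => y /sl.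
exact: lspan_mem.
Qed.

Lemma sub_kspan S x : S x -> kspan S x.
Proof.
move=> Sx; exists [:: x], (fun _ => 1); split; first by move=> y /[!inE] /eqP ->.
by rewrite /lincomb big_ord1 scale1r.
Qed.

Lemma kfree_cons x l : kfree l -> ~ lspan l x -> kfree (x :: l).
Proof.
move=> free_l x_notin c c0.
have lincomb_cons : lincomb c = c ord0 *: x + \sum_(i < size l) c (lift ord0 i) *: l`_i.
  by rewrite /lincomb big_ord_recl.
have c_head : c ord0 = 0.
  apply: contrapT => /eqP nz; apply: x_notin.
  exists (fun i => - (c ord0)^-1 * c (lift ord0 i)).
  have scaled_x : c ord0 *: x = - \sum_(i < size l) c (lift ord0 i) *: l`_i.
    by apply/eqP; rewrite -subr_eq0 opprK -lincomb_cons c0.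
  rewrite -[x](scalerK nz) scaled_x scalerN -scaleNr scaler_sumr /lincomb.
  by apply: eq_bigr => i _; rewrite scalerA.
have c_tail : forall i, c (lift ord0 i) = 0.
  by apply: free_l; move: c0; rewrite lincomb_cons c_head scale0r add0r.
by move=> i; case: (unliftP ord0 i) => [j ->|->].
Qed.

Lemma exists_free_spanning_subseq l :
  exists b, [/\ {subset b <= l}, kfree b & forall y, y \in l -> lspan b y].
Proof.
elim: l => [|x l [b [bl free_b lb]]].
  by exists [::]; split => // c _ [].
have lb' y : y \in x :: l -> y != x -> lspan b y.
  by rewrite in_cons => /predU1P [->|/lb]; rewrite ?eqxx.
have [xb|xnb] := pselect (lspan b x).
  exists b; split => [y /bl|//|y yl]; first by rewrite in_cons => ->; rewrite orbT.
  by have [->|] := eqVneq y x; last exact: lb'.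
exists (x :: b); split; last 1 first.
- move=> y yl; have [->|yx] := eqVneq y x; first by apply: lspan_mem; rewrite mem_head.
  apply: lspan_trans (lb' y yl yx) => z zb.
  by apply: lspan_mem; rewrite in_cons zb orbT.
- by move=> y /[!in_cons] /predU1P [->|/bl ->]; rewrite ?eqxx ?orbT.
- exact: kfree_cons.
Qed.

Lemma kspan_has_dim S l :
  (forall y, y \in l -> S y) -> (forall y, S y -> lspan l y) ->
  exists d, has_dim (kspan S) d.
Proof.
move=> lS Sl; have [b [bl free_b lb]] := exists_free_spanning_subseq l.
exists (size b), b; split => // [y /bl /lS|_ [s [c [sS ->]]]]; first exact: sub_kspan.
have [c' ->] : lspan b (lincomb c).
  by apply: ksubspace_lincomb (ksubspace_lspan b) _ => y /sS /Sl; apply: lspan_trans.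
by exists b, c'.
Qed.

Lemma kdim_gt0 S x : (exists d, has_dim S d) -> S x -> x != 0 -> (0 < kdim S)%N.
Proof.
rewrite /kdim => /(epsilon_spec (inhabits 0%N)).
case=> [[|y s] [<- _ _ span]] // Sx; apply: contraNT => _.
have [[|z t] [c [ts ->]]] := span x Sx; first by rewrite /lincomb big_ord0.
by have := ts z (mem_head _ _).
Qed.

End FiniteSpans.

Section Powers.
Variables (K : fieldType) (A : algType K).
Implicit Types (l : seq A) (V : A -> Prop).

Fixpoint prodseq l n : seq A :=
  if n is n.+1 then [seq a * b | a <- l, b <- prodseq l n] else [:: 1].

Lemma ksubspace_mulr_preimage W (y : A) :
  ksubspace W -> ksubspace (fun x => W (x * y)).
Proof.
case=> W0 WD WZ; split=> [|x z Wx Wz|a x Wx]; first by rewrite mul0r.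
  by rewrite mulrDl; apply: WD.
by rewrite -scalerAl; apply: WZ.
Qed.

Lemma ksubspace_mull_preimage W (x : A) :
  ksubspace W -> ksubspace (fun y => W (x * y)).
Proof.
case=> W0 WD WZ; split=> [|y z Wy Wz|a y Wy]; first by rewrite mulr0.
  by rewrite mulrDr; apply: WD.
by rewrite -scalerAr; apply: WZ.
Qed.

Lemma lspan_mul l1 l2 x y :
  lspan l1 x -> lspan l2 y -> lspan [seq a * b | a <- l1, b <- l2] (x * y).
Proof.
set l := [seq _ | _ <- _, _ <- _] => -[c1 ->] [c2 ->].
apply: ksubspace_lincomb (ksubspace_mulr_preimage _ (ksubspace_lspan l)) _ => a al.
apply: ksubspace_lincomb (ksubspace_mull_preimage _ (ksubspace_lspan l)) _ => b bl.
by apply: lspan_mem; apply: allpairs_f.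
Qed.

Lemma prodseq_prods V l n y :
  (forall a, a \in l -> V a) -> y \in prodseq l n -> prods V n y.
Proof.
move=> lV; elim: n y => [|n IH] y /=; first by rewrite inE => /eqP.
by case/allpairsP => -[a b] [al bl ->]; exists a, b; split; [apply: lV|apply: IH|].
Qed.

Lemma prods_lspan V l n y :
  (forall x, V x -> lspan l x) -> prods V n y -> lspan (prodseq l n) y.
Proof.
move=> Vl; elim: n y => [|n IH] y /=; first by move=> ->; apply: lspan_mem; rewrite mem_head.
by case=> v [w [Vv Pw ->]]; apply: lspan_mul; [apply: Vl|apply: IH].
Qed.

Lemma prods_one V n : V 1 -> prods V n 1.
Proof. by move=> V1; elim: n => [|n IH] //=; exists 1, 1; rewrite mulr1. Qed.

Lemma Vpow_has_dim V n : kfindim_subspace V -> exists d, has_dim (Vpow V n) d.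
Proof.
case=> _ [_ [bV [_ _ bVV Vspan]]].
apply: (@kspan_has_dim _ _ _ (prodseq bV n)) => y; first exact: prodseq_prods.
by apply: prods_lspan => x /Vspan /kspan_mem_lspan.
Qed.

Lemma kdim_Vpow_gt0 V n : kfindim_subspace V -> V 1 -> (0 < kdim (Vpow V n))%N.
Proof.
move=> finV V1; apply: (@kdim_gt0 _ _ _ 1); first exact: Vpow_has_dim.
  exact/sub_kspan/prods_one.
exact: oner_neq0.
Qed.

End Powers.

Definition rising (k n : nat) : nat := \prod_(i < k) (n + i).

Lemma rising_succ k n : (rising k n.+1 * n = rising k n * (n + k))%N.
Proof.
have -> : (rising k n * (n + k) = \prod_(i < k.+1) (n + i))%N by rewrite big_ord_recr.
rewrite big_ord_recl /= addn0 mulnC; congr (_ * _)%N.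
by apply: eq_bigr => i _; rewrite addnS.
Qed.

Lemma expn_le_rising k n : (n ^ k <= rising k n)%N.
Proof.
rewrite /rising; elim: k => [|k IH]; first by rewrite big_ord0.
by rewrite big_ord_recr expnSr leq_mul // leq_addr.
Qed.

Section Growth.
Variable d : nat -> nat.

Lemma rising_ratio_mono k N : (0 < N)%N ->
  (forall n, (N <= n)%N -> ((n + k) * d n <= n * d n.+1)%N) ->
  forall n, (N <= n)%N -> (d N * rising k n <= d n * rising k N)%N.
Proof.
move=> N_gt0 step n /subnKC <-; elim: (n - N)%N => [|m IH]; first by rewrite addn0.
have n_gt0 : (0 < N + m)%N by apply: leq_trans N_gt0 (leq_addr _ _).
rewrite addnS -(leq_pmul2r n_gt0) -mulnA rising_succ mulnA.
apply: leq_trans (leq_mul IH (leqnn _)) _.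
rewrite mulnAC [X in (_ <= X)%N]mulnAC leq_mul2r; apply/orP; right.
by rewrite [X in (X <= _)%N]mulnC [X in (_ <= X)%N]mulnC step ?leq_addr.
Qed.

Lemma poly_bound_not_eventually_fast M N0 N :
  (0 < N)%N -> (0 < d N)%N -> (forall n, (N0 <= n)%N -> (d n <= n ^ M)%N) ->
  ~ (forall n, (N <= n)%N -> ((n + M.+1) * d n <= n * d n.+1)%N).
Proof.
move=> N_gt0 dN_gt0 bound fast.
pose n := (maxn N0 N + rising M.+1 N).+1.
have [N0n Nn] : (N0 <= n)%N /\ (N <= n)%N by split; lia.
have n_gt0 : (0 < n)%N by lia.
have : (n ^ M * n <= n ^ M * rising M.+1 N)%N.
  rewrite -expnSr; apply: leq_trans (expn_le_rising _ _) _.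
  apply: leq_trans (leq_pmull _ dN_gt0) _.
  apply: leq_trans (rising_ratio_mono N_gt0 fast Nn) _.
  by rewrite leq_mul2r bound ?orbT.
by rewrite leq_pmul2l ?expn_gt0 ?n_gt0 // leqNgt ltnS leq_addl.
Qed.

Lemma dim_gap_infinitely_often (R : realType) M N0 :
  (forall n, 0 < d n)%N -> (forall n, (N0 <= n)%N -> (d n <= n ^ M)%N) ->
  forall N, exists n, (N < n)%N /\
    (d n)%:R > (M.+1%:R)^-1 * n%:R * ((d n.+1)%:R - (d n)%:R) :> R.
Proof.
move=> d_gt0 bound N; apply: contrapT => never.
apply: (poly_bound_not_eventually_fast (N := N.+1) _ (d_gt0 _) bound) => // n Nn.
have : ~ (d n)%:R > (M.+1%:R)^-1 * n%:R * ((d n.+1)%:R - (d n)%:R) :> R.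
  by move=> gap; apply: never; exists n.
move/negP; rewrite -leNgt -mulrA ler_pdivlMl ?ltr0n // => slow.
by rewrite -(ler_nat R) !natrM natrD; nra.
Qed.

End Growth.

Lemma eventually_ub_of_limn_esup_lt_pinfty (R : realType) (u : (\bar R)^nat) :
  (limn_esup u < +oo)%E -> exists (B : R) N, forall n, (N <= n)%N -> (u n <= B%:E)%E.
Proof.
case/ereal_inf_lt => _ [S [N _ NS] <-] sup_lt.
have ub n : (N <= n)%N -> (u n <= ereal_sup (u @` S))%E.
  by move=> /NS Sn; apply: ereal_sup_ubound; exists n.
move: sup_lt ub; case: (ereal_sup _) => [B| |] // _ ub; first by exists B, N.
by exists 0, N => n /ub; rewrite leeNy_eq => /eqP ->; apply: leNye.
Qed.

Lemma pow_bound_of_log_ratio_bound (R : realType) (d : nat -> nat) (B : R) N :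
  (forall n, 0 < d n)%N -> (forall n, (N <= n)%N -> ln (d n)%:R / ln n%:R <= B) ->
  exists M, forall n, (maxn N 2 <= n)%N -> (d n <= n ^ M)%N.
Proof.
move=> d_gt0 ratio; exists (Num.truncn B).+1 => n; rewrite geq_max => /andP [Nn n2].
have n_gt0 : (0 < n)%N by apply: leq_trans n2.
have ln_n_gt0 : 0 < ln (n%:R : R) by apply: ln_gt0; rewrite ltr1n.
have := ratio n Nn; rewrite ler_pdivrMr // => ln_d_le.
rewrite -(ler_nat R) natrX -ler_ln ?posrE ?exprn_gt0 ?ltr0n ?d_gt0 //.
rewrite lnXn ?ltr0n // -[X in _ <= X]mulr_natr; apply: le_trans ln_d_le _.
by rewrite mulrC; apply: ler_wpM2l; [exact: ltW | exact: ltW (truncnS_gt B)].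
Qed.

Lemma poly_bound_of_limn_esup_log (R : realType) (d : nat -> nat) :
  (forall n, 0 < d n)%N ->
  (limn_esup (fun n => (ln (d n)%:R / ln n%:R : R)%:E) < +oo)%E ->
  exists M N0, forall n, (N0 <= n)%N -> (d n <= n ^ M)%N.
Proof.
move=> d_gt0 /eventually_ub_of_limn_esup_lt_pinfty [B [N ratio]].
have [M bound] := @pow_bound_of_log_ratio_bound R d B N d_gt0 ratio.
by exists M, (maxn N 2).
Qed.

Theorem lemma2p4 (R : realType) (K : fieldType) (A : algType K) (V : A -> Prop) :
  kfindim_subspace V -> V 1 -> kgenerates V ->
  (GKdim_wrt R V < +oo)%E ->
  exists C : R, 0 < C /\
    forall N : nat, exists n : nat, (N < n)%N /\
      (kdim (Vpow V n))%:R >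
        C * n%:R * ((kdim (Vpow V n.+1))%:R - (kdim (Vpow V n))%:R).
Proof.
move=> finV V1 _ GK_finite.
pose d n := kdim (Vpow V n).
have d_gt0 n : (0 < d n)%N by apply: kdim_Vpow_gt0.
have [M [N0 bound]] := poly_bound_of_limn_esup_log d_gt0 GK_finite.
exists (M.+1%:R)^-1; split; first by rewrite invr_gt0 ltr0n.
exact: dim_gap_infinitely_often d_gt0 bound.
Qed.
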